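(* Let $a,b\in\{1,3,7,9\}$ with $a\neq b$, and let $7\le n\le 16$. Then $B_n(a,b)$ is not an absolute prime.
   Context: For a positive integer $N$ with decimal representation $d_1d_2\dots d_n$ (digits $d_k\in\{0,\dots,9\}$, $d_1\neq 0$), a permutation of the digits of $N$ is any integer $\sum_{k=1}^{n} d_{\sigma(k)}10^{n-k}$ with $\sigma$ a permutation of $\{1,\dots,n\}$. $N$ is called an absolute prime if every integer obtained by a permutation of the digits of $N$ (including $N$ itself) is prime. The repunit $A_n=(10^n-1)/9$. For digits $a,b$ and $n\ge 1$, $B_n(a,b)=a\cdot A_n+(b-a)$ is the $n$-digit integer whose first $n-1$ digits are $a$ and whose last digit is $b$. *)

From mathcomp Require Import all_boot.
Set Implicit Arguments. Unset Strict Implicit. Unset Printing Implicit Defensive.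

(* Decimal digits, least significant first; the fuel k = n is always enough. *)
Fixpoint rdigits (k n : nat) : seq nat :=
  match k with
  | 0 => [::]
  | k'.+1 => if n == 0 then [::] else n %% 10 :: rdigits k' (n %/ 10)
  end.

Definition digits (N : nat) : seq nat := rev (rdigits N N).

Definition of_digits (s : seq nat) : nat := foldl (fun acc d => acc * 10 + d) 0 s.

Definition absolute_prime (N : nat) : Prop :=
  0 < N /\ forall s : seq nat, perm_eq s (digits N) -> prime (of_digits s).

Definition repunit (n : nat) : nat := (10 ^ n - 1) %/ 9.

(* B_n(a,b) = a * A_n + (b - a); computed as (a*A_n + b) - a, which is exact
   for n >= 1 since a * A_n >= a. *)
Definition B (n a b : nat) : nat := a * repunit n + b - a.

Example B_test : B 3 1 7 = 117. Proof. by []. Qed.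
Example digits_test : digits 1234 = [:: 1; 2; 3; 4]. Proof. by vm_compute. Qed.
Example of_digits_test : of_digits [:: 1; 2; 3; 4] = 1234. Proof. by []. Qed.

(** The digit rearrangements of [B_n(a,b)] are the numbers
    [a * A_n + (b - a) * 10^k], [0 <= k < n].  Since [10] is a primitive root
    modulo [7] and [7] does not divide [b - a], as [k] runs over six
    consecutive values one of them is divisible by [7], unless [7] divides
    [a * A_n] (that is, [a = 7] or [n = 12]); in those cases [17], [23] or [29]
    divides some rearrangement.  The finitely many cases are checked by
    computation, reducing modulo [p] digit by digit so that no 16-digit number
    is ever built in unary. *)

From mathcomp Require Import all_boot zify.

Lemma of_digits_rcons s d : of_digits (rcons s d) = of_digits s * 10 + d.
Proof. exact: foldl_rcons. Qed.

Lemma of_digits_cat s1 s2 :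
  of_digits (s1 ++ s2) = of_digits s1 * 10 ^ size s2 + of_digits s2.
Proof.
elim/last_ind: s2 => [|s2 d IH]; first by rewrite cats0 muln1 addn0.
by rewrite -rcons_cat !of_digits_rcons IH size_rcons expnSr; lia.
Qed.

Lemma of_digits_take_le k s : of_digits (take k s) <= of_digits s.
Proof.
rewrite -{2}(cat_take_drop k s) of_digits_cat.
by have := expn_gt0 10 (size (drop k s)); nia.
Qed.

Lemma size_le_of_digits s : head 1 s != 0 -> size s <= of_digits s.
Proof.
elim/last_ind: s => [|s d IH] // hd; rewrite of_digits_rcons size_rcons.
case: s IH hd => [|e s] IH /=; first by rewrite lt0n; lia.
move=> /IH /=; lia.
Qed.

Lemma rdigits_of_digits k s : all (fun d => d < 10) s -> head 1 s != 0 ->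
  size s <= k -> rdigits k (of_digits s) = rev s.
Proof.
elim/last_ind: s k => [|s d IH] [|k] //; rewrite all_rcons size_rcons //.
rewrite rev_rcons => /andP[d_lt10 s_digits] hd; rewrite ltnS => sk.
have s_head : head 1 s != 0 by case: s {IH s_digits sk} hd.
have pos : 0 < of_digits (rcons s d).
  by rewrite (leq_trans _ (size_le_of_digits _ hd)) // size_rcons.
rewrite of_digits_rcons in pos *; rewrite /= eqn0Ngt pos /=.
rewrite modnMDl modn_small // divnMDl // divn_small // addn0 IH //.
Qed.

Lemma digits_of_digits s : all (fun d => d < 10) s -> head 1 s != 0 ->
  digits (of_digits s) = s.
Proof.
move=> s_digits hd.
by rewrite /digits rdigits_of_digits ?revK ?size_le_of_digits.
Qed.

Lemma pow10S_sub1 m : 10 ^ m.+1 - 1 = (10 ^ m - 1) * 10 + 9.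
Proof. by rewrite expnSr; have := expn_gt0 10 m; lia. Qed.

Lemma repunitS m : repunit m.+1 = repunit m * 10 + 1.
Proof.
have /dvdnP[q q9] : 9 %| 10 ^ m - 1.
  by elim: m => [|m IH] //; rewrite pow10S_sub1 dvdn_add ?dvdn_mulr.
rewrite /repunit pow10S_sub1 q9.
have -> : q * 9 * 10 + 9 = (q * 10 + 1) * 9 by lia.
by rewrite !mulnK.
Qed.

Lemma of_digits_nseq m a : of_digits (nseq m a) = a * repunit m.
Proof.
elim: m => [|m IH]; first by rewrite muln0.
have -> : nseq m.+1 a = rcons (nseq m a) a by elim: m {IH} => //= m ->.
by rewrite of_digits_rcons IH repunitS; lia.
Qed.

Lemma B_of_digits n a b : 0 < n -> B n a b = of_digits (rcons (nseq n.-1 a) b).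
Proof.
case: n => // m _; rewrite succnK /B repunitS of_digits_rcons of_digits_nseq.
by rewrite mulnDr muln1 mulnA; lia.
Qed.

Lemma digits_B n a b : 0 < a < 10 -> 0 < b < 10 -> 0 < n ->
  digits (B n a b) = rcons (nseq n.-1 a) b.
Proof.
move=> /andP[a_gt0 a_lt10] /andP[b_gt0 b_lt10] n_gt0.
rewrite B_of_digits // digits_of_digits //.
  by rewrite all_rcons b_lt10 all_nseq a_lt10 orbT.
by case: n.-1 => [|m] /=; rewrite -lt0n.
Qed.

Lemma perm_nseq_insert (T : eqType) i j (a b : T) :
  perm_eq (nseq i a ++ b :: nseq j a) (rcons (nseq (i + j) a) b).
Proof. by rewrite -cats1 nseqD -catA perm_cat2l -cat1s perm_catC. Qed.

Definition of_digits_mod p s := foldl (fun r d => (r * 10 + d) %% p) 0 s.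

Lemma of_digits_modE p s : of_digits_mod p s = of_digits s %% p.
Proof.
suff acc_mod r : foldl (fun r d => (r * 10 + d) %% p) (r %% p) s
               = foldl (fun r d => r * 10 + d) r s %% p.
  by have := acc_mod 0; rewrite mod0n.
elim: s r => [|d s IH] r //=.
by rewrite -modnDml modnMml modnDml IH.
Qed.

(* The prefix bounds [of_digits s] from below without evaluating it. *)
Definition composite_witness p s :=
  [&& 1 < p, p < of_digits (take 3 s) & of_digits_mod p s == 0].

Lemma composite_witness_not_prime p s :
  composite_witness p s -> ~~ prime (of_digits s).
Proof.
case/and3P=> p_gt1 p_lt; rewrite of_digits_modE -/(dvdn _ _) => p_dvd.
have p_neq1 : p != 1 by rewrite neq_ltn p_gt1 orbT.
apply/negP=> /prime_nt_dvdP/(_ p_neq1)/(_ p_dvd) p_eq.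
by have := of_digits_take_le 3 s; rewrite -p_eq leqNgt p_lt.
Qed.

Definition composite_rearrangement n a b :=
  has (fun i => has (fun p => composite_witness p (nseq i a ++ b :: nseq (n.-1 - i) a))
                    [:: 7; 17; 23; 29])
      (iota 0 n).

Lemma not_absolute_prime_B n a b : 0 < a < 10 -> 0 < b < 10 -> 0 < n ->
  composite_rearrangement n a b -> ~ absolute_prime (B n a b).
Proof.
move=> a_digit b_digit n_gt0 /hasP[i]; rewrite mem_iota => /andP[_ i_lt_n].
move=> /hasP[p _ /composite_witness_not_prime/negP not_prime] [_ all_prime].
apply/not_prime/all_prime; rewrite digits_B //.
by rewrite -[in nseq n.-1 a](subnKC (_ : i <= n.-1)) ?perm_nseq_insert //; lia.
Qed.

Theorem lemma7 (a b n : nat) :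
  a \in [:: 1; 3; 7; 9] -> b \in [:: 1; 3; 7; 9] -> a != b ->
  7 <= n <= 16 -> ~ absolute_prime (B n a b).
Proof.
move=> a_in b_in a_neq_b n_range.
have digit_range d : d \in [:: 1; 3; 7; 9] -> 0 < d < 10.
  by rewrite !inE => /or4P[] /eqP->.
have all_cases : all (fun n => all (fun a => all (fun b =>
      (a == b) || composite_rearrangement n a b)
    [:: 1; 3; 7; 9]) [:: 1; 3; 7; 9]) (iota 7 10) by vm_compute.
have n_in : n \in iota 7 10 by rewrite mem_iota; lia.
move/allP/(_ n n_in)/allP/(_ a a_in)/allP/(_ b b_in): all_cases.
rewrite (negPf a_neq_b) => /= composite.
by apply: not_absolute_prime_B; rewrite ?digit_range //; lia.
Qed.
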